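(* Let $p\in\mathbb Z$ with $1\le p\le m$, let $M$ be a polynomial $\mathfrak{gl}_{m|n}$-module and let $\lambda$ be a $(p|n)$-hook partition. Then $$\overline{\mathfrak{tr}}_{p|n}(M)^{\rm sing}_{\bar\lambda^{p|n}}=M^{\sigma_p\text{-}{\rm sing}}_{\bar\lambda^{\sigma_p}}.$$
   Context: $I_{m|n}=\{1,\dots,m\}\cup\{\tfrac12,\dots,n-\tfrac12\}$ with standard order $1<\dots<m<\tfrac12<\dots<n-\tfrac12$ (integers even, half-integers odd); $\mathfrak{gl}_{m|n}$ has basis $E_{i,j}$, Cartan subalgebra $\mathfrak h_{m|n}$ spanned by $E_{i,i}$, dual basis $\epsilon_i$. A module is polynomial if $\mathfrak h_{m|n}$-semisimple with weights in $\sum_{i\in I_{m|n}}\mathbb Z_{\ge0}\epsilon_i$. $\mathfrak{gl}_{p|n}\subseteq\mathfrak{gl}_{m|n}$ is the span of $E_{i,j}$ with $i,j\in I_{p|n}=\{1,\dots,p\}\cup\{\tfrac12,\dots,n-\tfrac12\}$, and $\overline{\mathfrak{tr}}_{p|n}(M)=\bigoplus_\nu M_\nu$, the sum over weights $\nu$ of $M$ with $\nu(E_{i,i})=0$ for $i=p+1,\dots,m$, a $\mathfrak{gl}_{p|n}$-module. For a $(p|n)$-hook partition $\lambda$ ($\lambda_{p+1}\le n$), with conjugate $\lambda'$ and $\langle x\rangle=\max(x,0)$: $\bar\lambda^{p|n}=\sum_{i=1}^p\lambda_i\epsilon_i+\sum_{i=1}^n\langle\lambda'_i-p\rangle\epsilon_{i-1/2}$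 (regarded as a weight of $\mathfrak{gl}_{m|n}$ vanishing on $E_{i,i}$, $i>p$), and $\bar\lambda^{\sigma_p}=\sum_{i=1}^p\lambda_i\epsilon_i+\sum_{i=1}^n\langle\lambda'_i-p\rangle\epsilon_{i-1/2}+\sum_{i=p+1}^m\langle\lambda_i-n\rangle\epsilon_i$. For a $\mathfrak{gl}_{p|n}$-module $N$, $N^{\rm sing}_\mu=\{v\in N_\mu: E_{i,j}v=0 \text{ for } i<j \text{ in } I_{p|n}\}$ (standard order). Let $<_{\sigma_p}$ be the total order $1<\dots<p<\tfrac12<\dots<n-\tfrac12<p+1<\dots<m$ on $I_{m|n}$; $M^{\sigma_p\text{-sing}}_\mu=\{v\in M_\mu: E_{i,j}v=0 \text{ for all } i<_{\sigma_p}j\}$. *)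

From HB Require Import structures.
From Stdlib Require List.
From mathcomp Require Import all_boot all_order all_algebra.
Set Implicit Arguments. Unset Strict Implicit. Unset Printing Implicit Defensive.
Import GRing.Theory.
Local Open Scope ring_scope.

(* Index set I_{m|n}: [inl i] (i : 'I_m) stands for the even index i+1,
   [inr j] (j : 'I_n) stands for the odd index j + 1/2. *)
Definition idx (m n : nat) := ('I_m + 'I_n)%type.

Definition parity (m n : nat) (a : idx m n) : bool :=
  if a is inr _ then true else false.

Definition std_rank (m n : nat) (a : idx m n) : nat :=
  match a with inl i => nat_of_ord i | inr j => (m + j)%N end.
Definition std_lt (m n : nat) (a b : idx m n) : bool :=
  (std_rank a < std_rank b)%N.

(* order <_{sigma_p}: 1 < ... < p < 1/2 < ... < n-1/2 < p+1 < ... < m *)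
Definition sigma_rank (m n p : nat) (a : idx m n) : nat :=
  match a with
  | inl i => if (i < p)%N then nat_of_ord i else (n + i)%N
  | inr j => (p + j)%N
  end.
Definition sigma_lt (m n p : nat) (a b : idx m n) : bool :=
  (sigma_rank p a < sigma_rank p b)%N.

Definition in_sub (m n p : nat) (a : idx m n) : bool :=
  match a with inl i => (i < p)%N | inr _ => true end.

Section Modules.
Variables (m n : nat) (K : fieldType) (V : lmodType K).
Variable E : idx m n -> idx m n -> V -> V.

Definition psign (a b c d : idx m n) : K :=
  (-1) ^+ ((parity a (+) parity b) && (parity c (+) parity d)).

Definition is_gl_module : Prop :=
  (forall a b (c : K) (u v : V), E a b (c *: u + v) = c *: E a b u + E a b v) /\
  (forall a b c d (v : V),
     E a b (E c d v) - psign a b c d *: E c d (E a b v)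
     = (if b == c then E a d v else 0)
       - psign a b c d *: (if d == a then E c b v else 0)).

Definition weight_vec (mu : idx m n -> K) (v : V) : Prop :=
  forall a, E a a v = mu a *: v.

Definition h_semisimple : Prop :=
  forall v : V, exists s : seq ((idx m n -> K) * V),
    v = \sum_(x <- s) x.2 /\ (forall x, List.In x s -> weight_vec x.1 x.2).

Definition polynomial_module : Prop :=
  h_semisimple /\
  forall (mu : idx m n -> K) (v : V), v != 0 -> weight_vec mu v ->
    exists k : idx m n -> nat, forall a, mu a = (k a)%:R.

(* v in trbar_{p|n}(M) = (+)_{nu, nu(E_ii)=0 for i>p} M_nu *)
Definition in_trunc (p : nat) (v : V) : Prop :=
  exists s : seq ((idx m n -> K) * V),
    v = \sum_(x <- s) x.2 /\
    (forall x, List.In x s ->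
       weight_vec x.1 x.2 /\ (forall a, ~~ in_sub p a -> x.1 a = 0)).

(* v in trbar_{p|n}(M)^sing_mu  (mu a only matters for a in I_{p|n}) *)
Definition trunc_sing (p : nat) (mu : idx m n -> K) (v : V) : Prop :=
  in_trunc p v /\
  (forall a, in_sub p a -> E a a v = mu a *: v) /\
  (forall a b, in_sub p a -> in_sub p b -> std_lt a b -> E a b v = 0).

Definition sigma_sing (p : nat) (mu : idx m n -> K) (v : V) : Prop :=
  weight_vec mu v /\ (forall a b, sigma_lt p a b -> E a b v = 0).

End Modules.

(* Partitions: weakly decreasing sequences of naturals; part i = lambda_{i+1}. *)
Definition is_partition (la : seq nat) : Prop := sorted geq la.
Definition part (la : seq nat) (i : nat) : nat := nth 0%N la i.
Definition conj_part (la : seq nat) (k : nat) : nat := count (fun x => k <= x)%N la.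
Definition hook (p n : nat) (la : seq nat) : Prop := (part la p <= n)%N.

(* bar lambda^{p|n}, as a weight of gl_{m|n} (nat subtraction = <x>) *)
Definition lam_pn (m n p : nat) (la : seq nat) (a : idx m n) : nat :=
  match a with
  | inl i => if (i < p)%N then part la i else 0%N
  | inr j => (conj_part la j.+1 - p)%N
  end.

Definition lam_sigma (m n p : nat) (la : seq nat) (a : idx m n) : nat :=
  match a with
  | inl i => if (i < p)%N then part la i else (part la i - n)%N
  | inr j => (conj_part la j.+1 - p)%N
  end.

From mathcomp Require Import all_boot all_algebra.
From mathcomp Require Import zify.
Set Implicit Arguments. Unset Strict Implicit. Unset Printing Implicit Defensive.
Import GRing.Theory.
Local Open Scope ring_scope.

(* For a hook partition the two weights coincide and vanish off I_{p|n}, and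
   I_{p|n} is an initial segment of the order <_{sigma_p} on which that order
   agrees with the standard one.  So the only extra content of
   sigma_p-singularity is E_{a,b} v = 0 for b outside I_{p|n}; but E_{a,b} v
   would have weight -1 at b, which is impossible in a polynomial module over
   a field of characteristic 0. *)

Section SigmaOrder.
Variables (m n p : nat).

Lemma sigma_lt_sub (a b : idx m n) : in_sub p a -> in_sub p b ->
  sigma_lt p a b = std_lt a b.
Proof.
rewrite /sigma_lt /std_lt.
case: a b => [i|j] [i'|j'] /= ha hb; rewrite ?ha ?hb //.
- by have lt_im := ltn_ord i; apply/idP/idP => _; lia.
- by have lt_i'm := ltn_ord i'; apply/idP/idP => ?; lia.
- by rewrite !ltn_add2l.
Qed.

Lemma sigma_lt_in_sub (a b : idx m n) : sigma_lt p a b -> in_sub p b -> in_sub p a.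
Proof.
rewrite /sigma_lt; case: a b => [i|j] [i'|j'] //=; case: (ltnP i p) => //.
- by move=> pi; case: ifP => // i'p; lia.
- by have := ltn_ord j'; lia.
Qed.

End SigmaOrder.

Lemma part_hook_le (p n : nat) (la : seq nat) i :
  is_partition la -> hook p n la -> (p <= i)%N -> (part la i <= n)%N.
Proof.
move=> sorted_la hook_la pi; apply: leq_trans hook_la; rewrite /part.
case: (ltnP i (size la)) => [i_lt|i_ge]; last by rewrite nth_default.
apply: (sorted_leq_nth (leT := geq)) => //.
- by move=> x y z /= yx zy; apply: leq_trans yx.
- exact: leqnn.
- by rewrite inE (leq_ltn_trans pi).
Qed.

Lemma lam_sigma_hook (m n p : nat) (la : seq nat) (a : idx m n) :
  is_partition la -> hook p n la -> lam_sigma p la a = lam_pn p la a.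
Proof.
move=> sorted_la hook_la; case: a => [i|j] //=; case: ltnP => // pi.
by apply/eqP; rewrite subn_eq0 (part_hook_le sorted_la hook_la).
Qed.

Lemma lam_pn_out_sub (m n p : nat) (la : seq nat) (a : idx m n) :
  ~~ in_sub p a -> lam_pn p la a = 0%N.
Proof. by case: a => [i|j] //= /negbTE ->. Qed.

Section GlModule.
Variables (m n : nat) (K : fieldType) (V : lmodType K).
Variable E : idx m n -> idx m n -> V -> V.
Hypothesis hE : is_gl_module E.

Lemma gl_act0 a b : E a b 0 = 0.
Proof.
have := proj1 hE a b (-1) 0 0; rewrite scaler0 addr0 scaleN1r => h.
by rewrite -[RHS](addNr (E a b 0)) -h.
Qed.

Lemma gl_actD a b u v : E a b (u + v) = E a b u + E a b v.
Proof. by rewrite -[u in LHS]scale1r (proj1 hE) scale1r. Qed.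

Lemma gl_actZ a b c u : E a b (c *: u) = c *: E a b u.
Proof. by rewrite -[c *: u]addr0 (proj1 hE) gl_act0 addr0. Qed.

Lemma gl_act_sum_eq0 a b (s : seq ((idx m n -> K) * V)) :
  (forall x, List.In x s -> E a b x.2 = 0) -> E a b (\sum_(x <- s) x.2) = 0.
Proof.
elim: s => [|x s IHs] hs; first by rewrite big_nil gl_act0.
rewrite big_cons gl_actD hs /=; last by left.
by rewrite IHs ?add0r // => y ys; apply: hs; right.
Qed.

Lemma gl_act_weight mu v a b : weight_vec E mu v ->
  weight_vec E (fun c => mu c + (c == a)%:R - (c == b)%:R) (E a b v).
Proof.
move=> hv c; have := proj2 hE c c a b v.
rewrite /psign addbb !scale1r hv gl_actZ => /eqP; rewrite subr_eq => /eqP ->.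
rewrite [b == c]eq_sym.
case: (c =P a) => [ca|_]; case: (c =P b) => [cb|_] /=; subst.
- by rewrite subrr add0r addrK.
- by rewrite !subr0 scalerDl scale1r addrC.
- by rewrite add0r addr0 scalerBl scale1r addrC.
- by rewrite !subr0 add0r addr0.
Qed.

Lemma in_trunc_weight0 p v a : in_trunc E p v -> ~~ in_sub p a -> E a a v = 0.
Proof.
move=> [s [-> hs]] ha; apply: gl_act_sum_eq0 => x /hs [hx hx0].
by rewrite hx hx0 // scale0r.
Qed.

Lemma sigma_sing_eq_weight p mu nu v : mu =1 nu ->
  sigma_sing E p mu v <-> sigma_sing E p nu v.
Proof. by move=> eq_mu; split=> -[hv hs]; split=> // a; rewrite hv eq_mu. Qed.

Hypothesis hK : [pchar K] =i pred0.
Hypothesis hpoly : polynomial_module E.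

Lemma polynomial_act_eq0 mu v a b :
  weight_vec E mu v -> mu b = 0 -> a != b -> E a b v = 0.
Proof.
move=> hv hb hab; apply/eqP/negP => /negP nz.
have [k /(_ b)] := proj2 hpoly _ _ nz (gl_act_weight a b hv).
rewrite eqxx eq_sym (negbTE hab) hb add0r sub0r => /eqP.
by rewrite eq_sym -subr_eq0 opprK natr1 ((pcharf0P K).1 hK).
Qed.

Lemma trunc_sing_iff_sigma_sing p (mu : idx m n -> K) v :
  (forall a, ~~ in_sub p a -> mu a = 0) ->
  trunc_sing E p mu v <-> sigma_sing E p mu v.
Proof.
move=> mu_out; split.
- move=> [v_trunc [v_wt v_sing]].
  have v_weight : weight_vec E mu v.
    move=> a; have [/v_wt //|a_out] := boolP (in_sub p a).
    by rewrite mu_out // scale0r (in_trunc_weight0 v_trunc).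
  split=> // a b ab; have [b_sub|b_out] := boolP (in_sub p b).
    have a_sub := sigma_lt_in_sub ab b_sub.
    by apply: v_sing; rewrite // -(sigma_lt_sub a_sub b_sub).
  apply: (polynomial_act_eq0 v_weight (mu_out b b_out)).
  by apply: contraTneq ab => ->; rewrite /sigma_lt ltnn.
- move=> [v_weight v_sing]; split; last split.
  + exists [:: (mu, v)]; split; first by rewrite big_seq1.
    by move=> x [<-|[]]; split.
  + by move=> a _; apply: v_weight.
  + by move=> a b a_sub b_sub ab; apply: v_sing; rewrite sigma_lt_sub.
Qed.

End GlModule.

Theorem corollary3p13 (m n p : nat) (hp1 : (1 <= p)%N) (hpm : (p <= m)%N)
  (K : fieldType) (hK : [pchar K] =i pred0) (V : lmodType K)
  (E : idx m n -> idx m n -> V -> V)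
  (hE : is_gl_module E) (hpoly : polynomial_module E)
  (la : seq nat) (hla : is_partition la) (hhook : hook p n la) :
  forall v : V,
    trunc_sing E p (fun a => (lam_pn p la a)%:R) v <->
    sigma_sing E p (fun a => (lam_sigma p la a)%:R) v.
Proof.
have lam_eq : (fun a : idx m n => (lam_sigma p la a)%:R) =1
               (fun a => (lam_pn p la a)%:R :> K).
  by move=> a /=; rewrite lam_sigma_hook.
move=> v; rewrite (sigma_sing_eq_weight E p v lam_eq).
apply: trunc_sing_iff_sigma_sing => // a a_out.
by rewrite lam_pn_out_sub.
Qed.
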